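(* Let $A\in\mathbb{R}^{m\times n}$ be semi-monotone and let $A=P_1-R_1+S_1=P_2-R_2+S_2=P_3-R_3+S_3=P_4-R_4+S_4$ be four double proper weak regular splittings of $A$. Suppose $N(S_2)\supseteq N(P_2)$, $R(S_2)\subseteq R(P_2)$, $N(S_4)\supseteq N(P_4)$, $R(S_4)\subseteq R(P_4)$, $1\notin\sigma(S_2P_1^{\dagger})$ and $1\notin\sigma(S_4P_3^{\dagger})$. Define $\widehat{A}_1=(I-S_2P_1^{\dagger})A$, $\widehat{P}_1=P_2$, $\widehat{R}_1=R_2-S_2P_1^{\dagger}R_1$, and $\widehat{A}_2=(I-S_4P_3^{\dagger})A$, $\widehat{P}_2=P_4$, $\widehat{R}_2=R_4-S_4P_3^{\dagger}R_3$, and suppose $\widehat{A}_i^{\dagger}\geq 0$ for $i=1,2$. If $\widehat{P}_1^{\dagger}\widehat{A}_1\geq\widehat{P}_2^{\dagger}\widehat{A}_2$ and $\widehat{P}_1^{\dagger}\widehat{R}_1\geq\widehat{P}_2^{\dagger}\widehat{R}_2$, then $\rho(W_{12})\leq\rho(W_{34})<1$, where $$W_{12}=\begin{pmatrix} P_2^{\dagger}R_2-P_2^{\dagger}S_2P_1^{\dagger}R_1 & P_2^{\dagger}S_2P_1^{\dagger}S_1\\ I & 0\end{pmatrix},\qquad W_{34}=\begin{pmatrix} P_4^{\dagger}R_4-P_4^{\dagger}S_4P_3^{\dagger}R_3 & P_4^{\dagger}S_4P_3^{\dagger}S_3\\ I & 0\end{pmatrix}.$$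
   Context: For $M\in\mathbb{R}^{m\times n}$, $M^{\dagger}$ is its Moore–Penrose inverse, $R(M)$, $N(M)$ its range and null space; inequalities are entrywise; $\rho$ is the spectral radius, $\sigma$ the spectrum. $A$ is semi-monotone if $A^{\dagger}\geq0$. A double splitting $A=P-R+S$ is a double proper splitting if $R(P)=R(A)$ and $N(P)=N(A)$; it is double proper weak regular if moreover $P^{\dagger}\geq 0$, $P^{\dagger}R\geq 0$, $P^{\dagger}S\leq 0$. *)

From HB Require Import structures.
From mathcomp Require Import all_boot all_order all_algebra.
From mathcomp Require Import boolp classical_sets reals.
From mathcomp Require Import complex.
Set Implicit Arguments. Unset Strict Implicit. Unset Printing Implicit Defensive.
Import Order.TTheory GRing.Theory Num.Theory.
Local Open Scope ring_scope.
Local Open Scope classical_set_scope.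

Section Defs.
Variable R : realType.

Definition is_MP_inverse (m n : nat) (A : 'M[R]_(m, n)) (X : 'M[R]_(n, m)) : Prop :=
  [/\ A *m X *m A = A, X *m A *m X = X,
      (A *m X)^T = A *m X & (X *m A)^T = X *m A].

Definition pinv (m n : nat) (A : 'M[R]_(m, n)) : 'M[R]_(n, m) :=
  xget 0 [set X | is_MP_inverse A X].

Definition rangesp (m n : nat) (A : 'M[R]_(m, n)) : set 'cV[R]_m :=
  [set A *m x | x in [set: 'cV[R]_n]].
Definition nullsp (m n : nat) (A : 'M[R]_(m, n)) : set 'cV[R]_n :=
  [set x | A *m x = 0].

Definition mx_ge (m n : nat) (A B : 'M[R]_(m, n)) : Prop :=
  forall i j, B i j <= A i j.
Definition mx_nonneg (m n : nat) (A : 'M[R]_(m, n)) : Prop := mx_ge A 0.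
Definition mx_nonpos (m n : nat) (A : 'M[R]_(m, n)) : Prop := mx_ge 0 A.

Definition semi_monotone (m n : nat) (A : 'M[R]_(m, n)) : Prop :=
  mx_nonneg (pinv A).

Definition double_proper_weak_regular (m n : nat) (A P Q S : 'M[R]_(m, n)) : Prop :=
  A = P - Q + S /\
  [/\ rangesp P = rangesp A, nullsp P = nullsp A,
      mx_nonneg (pinv P), mx_nonneg (pinv P *m Q) & mx_nonpos (pinv P *m S)].

Definition spectrum (n : nat) (M : 'M[R]_n) : set R[i] :=
  [set l | eigenvalue (map_mx (fun x : R => x%:C%C) M) l].

Definition spectral_radius (n : nat) (M : 'M[R]_n) : R :=
  sup [set Normc.normc l | l in spectrum M].

End Defs.

From HB Require Import structures.
From mathcomp Require Import all_boot all_order all_algebra.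
From mathcomp Require Import boolp classical_sets reals.
From mathcomp Require Import complex polyrcf ring lra.
Import Order.TTheory GRing.Theory Num.Theory Normc.
Local Open Scope ring_scope.
Set Implicit Arguments. Unset Strict Implicit. Unset Printing Implicit Defensive.

(* Let W = [B C; I 0] be the iteration matrix of a pair of splittings and
   T = B + C.  The hat matrix Ah = P2 - (P2 - Ah) is a proper weak regular
   splitting with P2^+ (P2 - Ah) = T, so the partial sums of sum_j T^j P2^+ are
   bounded by Ah^+ >= 0; hence no nonzero u >= 0 satisfies u <= T u.  An
   eigenvalue l of W with |l| >= 1 would give one, since the moduli u of the
   top half of an eigenvector satisfy |l| u <= (B + |l|^-1 C) u.  For the
   comparison, 0 < |l| < 1 and C1 <= C2 turn this into
   |l| u <= (B2 + |l|^-1 C2) u, i.e. (u, u / |l|) is a nonnegative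
   subinvariant vector of W34 for the ratio |l|.  By the Collatz-Wielandt
   bound W34 then has a real eigenvalue >= |l|; that bound follows from the
   inverse-positivity of s I - M beyond the largest real eigenvalue of a
   nonnegative M, proved by induction on the dimension with Schur
   complements. *)

Section RealRoots.
Variable R : rcfType.
Implicit Types (p q : {poly R}) (r s t x y : R).

Definition roots_lt p r := forall s, root p s -> s < r.

Lemma poly_root_ge p x :
  0 < lead_coef p -> p.[x] <= 0 -> exists2 y, x <= y & root p y.
Proof.
move=> lc_gt0 px_le0; have [z pz_gt] := poly_pinfty_gt_lc lc_gt0.
have x_le_max : x <= Num.max x z by rewrite le_max lexx.
have pmax_ge0 : 0 <= p.[Num.max x z].
  by rewrite (le_trans (ltW lc_gt0)) // pz_gt // le_max lexx orbT.
have [y /andP[xy _] rooty] := poly_ivt x_le_max (introT andP (conj px_le0 pmax_ge0)).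
by exists y.
Qed.

Lemma gt0_roots_lt p r : 0 < lead_coef p -> roots_lt p r -> 0 < p.[r].
Proof.
move=> lc_gt0 p_lt; rewrite ltNge; apply/negP => /(poly_root_ge lc_gt0)[y ry /p_lt].
by rewrite ltNge ry.
Qed.

Lemma poly_ge0_right_limit q y : (forall s, y < s -> 0 <= q.[s]) -> 0 <= q.[y].
Proof.
move=> q_ge0; rewrite leNgt; apply/negP => qy_lt0.
have [d d_gt0 close] := poly_cont y q (ltac:(by rewrite oppr_gt0) : 0 < - q.[y]).
have d2_gt0 : 0 < d / 2 by rewrite divr_gt0.
have yd_close : `|(y + d / 2) - y| < d.
  by rewrite addrAC subrr add0r gtr0_norm // ltr_pdivrMr // ltr_pMr // ltr1n.
have /ltr_normlW := close _ yd_close; rewrite ltrBlDr addNr => qs_lt0.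
have := q_ge0 (y + d / 2); rewrite ltrDl d2_gt0 => /(_ isT).
by rewrite leNgt qs_lt0.
Qed.

Lemma poly_max_root p s : p != 0 -> root p s ->
  exists y, [/\ s <= y, root p y & forall t, root p t -> t <= y].
Proof.
move=> p_neq0 ps.
have in_bound t : root p t -> t < cauchy_bound p.
  by move=> /(root_in_cauchy_bound p_neq0); rewrite in_itv => /andP[].
have s_in : s \in `](s - 1), (cauchy_bound p)[.
  by rewrite in_itv /= in_bound // andbT ltrBlDr ltrDl.
case: (prev_rootP p (s - 1) (cauchy_bound p)) => [/eqP|y _ /eqP py _ noroot_after|c _ _ noroot].
- by rewrite (negbTE p_neq0).
- have below t : root p t -> t <= y.
    move=> pt; rewrite leNgt; apply/negP => yt.
    by have := noroot_after t; rewrite in_itv /= yt in_bound // pt => /(_ isT).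
  by exists y; split; rewrite ?below.
- by have := noroot s s_in; rewrite ps.
Qed.
End RealRoots.

Section NonnegMatrices.
Variable R : realType.

Lemma mxBE (m n : nat) (A B : 'M[R]_(m, n)) i j : (A - B) i j = A i j - B i j.
Proof. by rewrite !mxE. Qed.

Lemma mx_nonnegP (m n : nat) (A : 'M[R]_(m, n)) : mx_nonneg A <-> forall i j, 0 <= A i j.
Proof. by split=> A_ge0 i j; have := A_ge0 i j; rewrite mxE. Qed.

Lemma mx_nonposP (m n : nat) (A : 'M[R]_(m, n)) : mx_nonpos A <-> forall i j, A i j <= 0.
Proof. by split=> A_le0 i j; have := A_le0 i j; rewrite mxE. Qed.

Lemma mx_ge_mul2l (m n p : nat) (A : 'M[R]_(m, n)) (X Y : 'M[R]_(n, p)) :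
  mx_nonneg A -> mx_ge X Y -> mx_ge (A *m X) (A *m Y).
Proof.
by move=> /mx_nonnegP A_ge0 XY i j; rewrite !mxE; apply: ler_sum => k _; apply: ler_wpM2l.
Qed.

Lemma mx_ge_mul2r (m n p : nat) (A B : 'M[R]_(m, n)) (X : 'M[R]_(n, p)) :
  mx_nonneg X -> mx_ge A B -> mx_ge (A *m X) (B *m X).
Proof.
by move=> /mx_nonnegP X_ge0 AB i j; rewrite !mxE; apply: ler_sum => k _; apply: ler_wpM2r.
Qed.

Lemma mx_nonneg_mul (m n p : nat) (A : 'M[R]_(m, n)) (B : 'M[R]_(n, p)) :
  mx_nonneg A -> mx_nonneg B -> mx_nonneg (A *m B).
Proof. by move=> A_ge0 B_ge0; rewrite /mx_nonneg -(mulmx0 _ A); apply: mx_ge_mul2l. Qed.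

Lemma mx_nonpos_mul (m n p : nat) (A : 'M[R]_(m, n)) (B : 'M[R]_(n, p)) :
  mx_nonpos A -> mx_nonpos B -> mx_nonneg (A *m B).
Proof.
move=> /mx_nonposP A_le0 /mx_nonposP B_le0; apply/mx_nonnegP => i j.
by rewrite mxE sumr_ge0 // => k _; rewrite mulr_le0.
Qed.

Lemma mx_nonpos_mul_nonneg (m n p : nat) (A : 'M[R]_(m, n)) (B : 'M[R]_(n, p)) :
  mx_nonpos A -> mx_nonneg B -> mx_nonpos (A *m B).
Proof.
move=> /mx_nonposP A_le0 /mx_nonnegP B_ge0; apply/mx_nonposP => i j.
by rewrite mxE sumr_le0 // => k _; rewrite mulr_le0_ge0.
Qed.

Lemma mx_nonneg_add (m n : nat) (A B : 'M[R]_(m, n)) :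
  mx_nonneg A -> mx_nonneg B -> mx_nonneg (A + B).
Proof.
by move=> /mx_nonnegP A_ge0 /mx_nonnegP B_ge0; apply/mx_nonnegP => i j; rewrite mxE addr_ge0.
Qed.

Lemma mx_nonneg_scale (m n : nat) (a : R) (A : 'M[R]_(m, n)) :
  0 <= a -> mx_nonneg A -> mx_nonneg (a *: A).
Proof. by move=> a_ge0 /mx_nonnegP A_ge0; apply/mx_nonnegP => i j; rewrite mxE mulr_ge0. Qed.

Lemma mx_nonneg_scalar (n : nat) (a : R) : 0 <= a -> mx_nonneg (a%:M : 'M[R]_n).
Proof. by move=> a_ge0; apply/mx_nonnegP => i j; rewrite mxE mulrn_wge0. Qed.

Lemma mx_nonneg_block (m1 m2 n1 n2 : nat) (A : 'M[R]_(m1, n1)) (B : 'M[R]_(m1, n2))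
    (C : 'M[R]_(m2, n1)) (D : 'M[R]_(m2, n2)) :
  mx_nonneg (block_mx A B C D) <->
  [/\ mx_nonneg A, mx_nonneg B, mx_nonneg C & mx_nonneg D].
Proof.
split=> [/mx_nonnegP M_ge0 | [/mx_nonnegP A_ge0 /mx_nonnegP B_ge0]].
  split; apply/mx_nonnegP => i j.
  - by have := M_ge0 (lshift _ i) (lshift _ j); rewrite block_mxEul.
  - by have := M_ge0 (lshift _ i) (rshift _ j); rewrite block_mxEur.
  - by have := M_ge0 (rshift _ i) (lshift _ j); rewrite block_mxEdl.
  - by have := M_ge0 (rshift _ i) (rshift _ j); rewrite block_mxEdr.
move=> /mx_nonnegP C_ge0 /mx_nonnegP D_ge0; apply/mx_nonnegP => i j.
rewrite -(splitK i) -(splitK j); case: (split i) => i'; case: (split j) => j';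
  by rewrite ?block_mxEul ?block_mxEur ?block_mxEdl ?block_mxEdr.
Qed.

Lemma mx_ge_col_mx (m1 m2 n : nat) (A1 B1 : 'M[R]_(m1, n)) (A2 B2 : 'M[R]_(m2, n)) :
  mx_ge A1 B1 -> mx_ge A2 B2 -> mx_ge (col_mx A1 A2) (col_mx B1 B2).
Proof.
move=> le1 le2 i j; rewrite -(splitK i).
by case: (split i) => i'; rewrite ?col_mxEu ?col_mxEd.
Qed.

Lemma mx_geB2l (m n : nat) (A X Y : 'M[R]_(m, n)) : mx_ge (A - X) (A - Y) -> mx_ge Y X.
Proof. by move=> AXY i j; have := AXY i j; rewrite !mxE lerD2l lerN2. Qed.

End NonnegMatrices.

Section MoorePenrose.
Variable R : realType.
Local Open Scope classical_set_scope.

Lemma mulmx_trmx_eq0 (p q : nat) (X : 'M[R]_(p, q)) : X *m X^T = 0 -> X = 0.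
Proof.
move=> XXt0; apply/matrixP => i j; rewrite mxE.
have /matrixP/(_ i i) := XXt0; rewrite !mxE => sq_sum0.
have sq_ge0 k : 0 <= X i k * X^T k i by rewrite mxE -expr2 sqr_ge0.
have /(_ j isT)/eqP := psumr_eq0P (fun k _ => sq_ge0 k) sq_sum0.
by rewrite mxE -expr2 sqrf_eq0 => /eqP.
Qed.

Lemma gram_unitmx (p q : nat) (G : 'M[R]_(p, q)) : row_free G -> G *m G^T \in unitmx.
Proof.
move=> G_free; rewrite -row_free_unit -kermx_eq0; apply/eqP.
set K := kermx _; have KG : K *m (G *m G^T) = 0 by rewrite mulmx_ker.
have : (K *m G) *m (K *m G)^T = 0 by rewrite trmx_mul mulmxA -(mulmxA K) KG mul0mx.
by move/mulmx_trmx_eq0/eqP; rewrite mulmx_free_eq0 // => /eqP.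
Qed.

Lemma is_MP_inverse_exists (p q : nat) (A : 'M[R]_(p, q)) : exists X, is_MP_inverse A X.
Proof.
have AFG : A = col_base A *m row_base A by rewrite mulmx_base.
have G_free : row_free (row_base A) by apply: row_base_free.
have Ft_free : row_free (col_base A)^T.
  by rewrite /row_free mxrank_tr; have := col_base_full A; rewrite /row_full.
move: (col_base A) (row_base A) AFG G_free Ft_free => F G AFG G_free Ft_free.
have H_unit := gram_unitmx G_free.
have K_unit : F^T *m F \in unitmx by have := gram_unitmx Ft_free; rewrite trmxK.
set H := G *m G^T in H_unit *; set K := F^T *m F in K_unit *.
have HE : G *m G^T = H by []; have KE : F^T *m F = K by [].
clearbody H K.
have Ht : H^T = H by rewrite -HE trmx_mul trmxK.
have Kt : K^T = K by rewrite -KE trmx_mul trmxK.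
exists (G^T *m invmx H *m invmx K *m F^T).
have AX : A *m (G^T *m invmx H *m invmx K *m F^T) = F *m invmx K *m F^T.
  by rewrite [A in A *m _]AFG -!mulmxA (mulmxA G) HE (mulmxA H) mulmxV // mul1mx.
have XA : (G^T *m invmx H *m invmx K *m F^T) *m A = G^T *m invmx H *m G.
  by rewrite [A in _ *m A]AFG !mulmxA -(mulmxA _ F^T) KE mulmxKV.
split.
- by rewrite AX [A in _ *m A]AFG -!mulmxA (mulmxA F^T) KE mulKmx.
- by rewrite XA -!mulmxA (mulmxA G) HE (mulmxA H) mulmxV // mul1mx.
- by rewrite AX !trmx_mul trmxK trmx_inv Kt mulmxA.
- by rewrite XA !trmx_mul trmxK trmx_inv Ht mulmxA.
Qed.

Lemma pinvP (p q : nat) (A : 'M[R]_(p, q)) : is_MP_inverse A (pinv A).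
Proof. by rewrite /pinv; apply: (xgetPex 0 (is_MP_inverse_exists A)). Qed.

Lemma matrix_delta_colP (p q : nat) (X Y : 'M[R]_(p, q)) :
  (forall j, X *m (delta_mx j 0 : 'cV_q) = Y *m delta_mx j 0) -> X = Y.
Proof.
move=> eqXY; apply/matrixP => i j.
by have /matrixP/(_ i 0) := eqXY j; rewrite -!colE !mxE.
Qed.

Lemma nullsp_sub_mulmx (p p' q k : nat) (P : 'M[R]_(p, q)) (Q : 'M[R]_(p', q))
    (Y : 'M[R]_(q, k)) :
  nullsp P `<=` nullsp Q -> P *m Y = 0 -> Q *m Y = 0.
Proof.
move=> PQ PY0; apply: matrix_delta_colP => j; rewrite mul0mx -mulmxA; apply: PQ.
by rewrite /nullsp /= mulmxA PY0 mul0mx.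
Qed.

Lemma rangesp_sub_proj (p q q' : nat) (P : 'M[R]_(p, q)) (Q : 'M[R]_(p, q')) :
  rangesp Q `<=` rangesp P -> P *m pinv P *m Q = Q.
Proof.
move=> QP; have [PXP _ _ _] := pinvP P.
apply: matrix_delta_colP => j; have [x _ Px] := QP (Q *m delta_mx j 0) (ex_intro2 _ _ _ I erefl).
by rewrite -mulmxA -Px mulmxA PXP.
Qed.

Lemma nullsp_sub_proj (p p' q : nat) (P : 'M[R]_(p, q)) (Q : 'M[R]_(p', q)) :
  nullsp P `<=` nullsp Q -> Q *m (pinv P *m P) = Q.
Proof.
move=> PQ; have [PXP _ _ _] := pinvP P.
have : P *m (1%:M - pinv P *m P) = 0 by rewrite mulmxBr mulmx1 mulmxA PXP subrr.
by move/(nullsp_sub_mulmx PQ)/eqP; rewrite mulmxBr mulmx1 subr_eq0 eq_sym => /eqP.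
Qed.

Lemma nullsp_sub_pinv (p p' q : nat) (P : 'M[R]_(p, q)) (Q : 'M[R]_(p', q)) :
  nullsp P `<=` nullsp Q -> pinv P *m P *m pinv Q = pinv Q.
Proof.
move=> PQ; have [_ _ _ PXt] := pinvP P; have [_ XQX _ QXt] := pinvP Q.
have QXE : pinv Q = Q^T *m (pinv Q)^T *m pinv Q by rewrite -trmx_mul QXt XQX.
by rewrite QXE !mulmxA -PXt -trmx_mul nullsp_sub_proj.
Qed.

Lemma rangesp_sub_pinv (p q q' : nat) (P : 'M[R]_(p, q)) (Q : 'M[R]_(p, q')) :
  rangesp Q `<=` rangesp P -> pinv Q *m (P *m pinv P) = pinv Q.
Proof.
move=> QP; have [_ _ PXt _] := pinvP P; have [_ XQX QXt _] := pinvP Q.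
have QXE : pinv Q = pinv Q *m (pinv Q)^T *m Q^T by rewrite -mulmxA -trmx_mul QXt mulmxA XQX.
by rewrite QXE -!mulmxA -PXt -trmx_mul rangesp_sub_proj.
Qed.

Lemma pinv_proj_eq (p p' q : nat) (P : 'M[R]_(p, q)) (Q : 'M[R]_(p', q)) :
  nullsp P = nullsp Q -> pinv P *m P = pinv Q *m Q.
Proof.
move=> PQ; have [_ _ _ PXt] := pinvP P; have [_ _ _ QXt] := pinvP Q.
have PQP : pinv Q *m Q *m (pinv P *m P) = pinv Q *m Q by rewrite -mulmxA nullsp_sub_proj ?PQ.
have QPQ : pinv P *m P *m (pinv Q *m Q) = pinv P *m P by rewrite -mulmxA nullsp_sub_proj ?PQ.
by rewrite -PXt -QPQ trmx_mul PXt QXt PQP.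
Qed.

End MoorePenrose.

Section InversePositivity.
Variable R : realType.

Lemma horner_char_poly (n : nat) (M : 'M[R]_n) t : (char_poly M).[t] = \det (t%:M - M).
Proof.
rewrite /char_poly -horner_evalE -det_map_mx; congr (\det _).
by apply/matrixP => i j; rewrite !mxE /= horner_evalE hornerD hornerN hornerMn hornerX hornerC.
Qed.

Lemma lead_coef_char_poly_gt0 (n : nat) (M : 'M[R]_n) : 0 < lead_coef (char_poly M).
Proof. by rewrite (monicP (char_poly_monic M)) ltr01. Qed.

Lemma char_poly_gt0 (n : nat) (M : 'M[R]_n) t : roots_lt (char_poly M) t -> 0 < (char_poly M).[t].
Proof. exact/gt0_roots_lt/lead_coef_char_poly_gt0. Qed.

Lemma det_block_schur (n : nat) (a : 'M[R]_1) (b : 'rV_n) (c : 'cV_n) (D X : 'M_n) :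
  X *m D = 1%:M -> \det (block_mx a b c D) = \det D * (a - b *m X *m c) 0 0.
Proof.
move=> XD.
have -> : block_mx a b c D =
    block_mx 1%:M (b *m X) 0 1%:M *m block_mx (a - b *m X *m c) 0 c D.
  rewrite mulmx_block !mul1mx !mul0mx !add0r.
  by rewrite -(mulmxA b X D) XD mulmx1 subrK.
by rewrite det_mulmx det_ublock det_lblock !det1 !mul1r det_mx11 mulrC.
Qed.

Lemma scalar_sub_block (n : nat) (a : 'M[R]_1) (b : 'rV_n) (c : 'cV_n) (D : 'M_n) t :
  t%:M - block_mx a b c D = block_mx (t%:M - a) (- b) (- c) (t%:M - D).
Proof. by rewrite (scalar_mx_block 1 n) opp_block_mx add_block_mx add0r sub0r. Qed.

Lemma char_poly_block_schur (n : nat) (a : 'M[R]_1) (b : 'rV_n) (c : 'cV_n) (D X : 'M_n) t :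
  X *m (t%:M - D) = 1%:M ->
  (char_poly (block_mx a b c D)).[t] = (char_poly D).[t] * (t - a 0 0 - (b *m X *m c) 0 0).
Proof.
move=> XD; rewrite !horner_char_poly scalar_sub_block (det_block_schur _ _ _ XD).
by rewrite !(mulNmx, mulmxN) opprK !mxE eqxx mulr1n.
Qed.

Lemma roots_lt_block_corner (n : nat) (a : 'M[R]_1) (b : 'rV_n) (c : 'cV_n) (D : 'M_n) r :
  mx_nonneg b -> mx_nonneg c ->
  (forall t, roots_lt (char_poly D) t ->
     exists2 X, mx_nonneg X & X *m (t%:M - D) = 1%:M) ->
  roots_lt (char_poly (block_mx a b c D)) r -> roots_lt (char_poly D) r.
Proof.
(* With M the whole block matrix: for t above the largest real root y of
   char_poly D, (t - a) char_poly D - char_poly M = char_poly D * b (t - D)^-1 c >= 0,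
   so letting t decrease to y gives char_poly M (y) <= 0. *)
move=> b_ge0 c_ge0 inv_above ltM s Ds; rewrite ltNge; apply/negP => rs.
have [y [sy Dy y_max]] := poly_max_root (monic_neq0 (char_poly_monic D)) Ds.
have lt_above t : y < t -> roots_lt (char_poly D) t.
  by move=> yt z /y_max zy; apply: le_lt_trans yt.
set q := ('X - (a 0 0)%:P) * char_poly D - char_poly (block_mx a b c D).
have q_above t : y < t -> 0 <= q.[t].
  move=> yt; have [X X_ge0 XD] := inv_above t (lt_above t yt).
  rewrite !hornerE (char_poly_block_schur _ _ _ XD).
  have -> : forall u v w x : R, (u - v) * w - w * (u - v - x) = w * x.
    by move=> u v w x; ring.
  apply: mulr_ge0; first exact/ltW/char_poly_gt0/lt_above.
  by have /mx_nonnegP := mx_nonneg_mul (mx_nonneg_mul b_ge0 X_ge0) c_ge0; apply.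
have := poly_ge0_right_limit q_above.
rewrite !hornerE (rootP Dy) mulr0 add0r oppr_ge0 => My_le0.
have [z yz /ltM] := poly_root_ge (lead_coef_char_poly_gt0 _) My_le0.
by rewrite ltNge (le_trans rs (le_trans sy yz)).
Qed.

Lemma schur_inverse_nonneg (n : nat) (a r : R) (b : 'rV_n) (c : 'cV_n) (D X : 'M_n) :
  mx_nonneg b -> mx_nonneg c -> mx_nonneg X -> X *m (r%:M - D) = 1%:M ->
  0 < r - a - (b *m X *m c) 0 0 ->
  exists2 Y, mx_nonneg Y & Y *m (r%:M - block_mx a%:M b c D) = 1%:M.
Proof.
move=> b_ge0 c_ge0 X_ge0 XD.
set u := X *m c; set v := b *m X; set w := (v *m c) 0 0; set g := r - a - w => g_gt0.
have vc : v *m c = w%:M by rewrite -mx11_scalar.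
have vD : v *m (r%:M - D) = b by rewrite -mulmxA XD mulmx1.
have gV_ge0 : 0 <= g^-1 by rewrite invr_ge0 ltW.
have gVg : g^-1 * g = 1 by rewrite mulVf // gt_eqF.
exists (block_mx (g^-1)%:M (g^-1 *: v) (g^-1 *: u) (X + g^-1 *: (u *m v))).
  apply/mx_nonneg_block; split; [exact: mx_nonneg_scalar | exact: mx_nonneg_scale
    (mx_nonneg_mul _ _) | exact: mx_nonneg_scale (mx_nonneg_mul _ _) |].
  exact: mx_nonneg_add (mx_nonneg_scale _ (mx_nonneg_mul (mx_nonneg_mul _ _) (mx_nonneg_mul _ _))).
rewrite scalar_sub_block -raddfB mulmx_block (scalar_mx_block 1 n 1).
congr block_mx.
- rewrite mul_scalar_mx scale_scalar_mx mulmxN -scalemxAl vc scale_scalar_mx -raddfB.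
  by rewrite -mulrBr gVg.
- by rewrite mul_scalar_mx -scalemxAl vD scalerN addNr.
- rewrite mul_mx_scalar mulmxN mulmxDl -scalemxAl -mulmxA vc mul_mx_scalar -/u.
  rewrite !scalerA -{2}(scale1r u) -scalerDl -scalerBl.
  have -> : (r - a) / g - (1 + g^-1 * w) = g^-1 * g - 1 by rewrite /g; ring.
  by rewrite gVg subrr scale0r.
- by rewrite mulmxDl XD -!scalemxAl -mulmxA vD mulmxN scalerN addrCA addNr addr0.
Qed.

Lemma roots_lt_inverse_nonneg (n : nat) (M : 'M[R]_n) r :
  mx_nonneg M -> roots_lt (char_poly M) r ->
  exists2 X, mx_nonneg X & X *m (r%:M - M) = 1%:M.
Proof.
elim: n M r => [|n IH] M r.
  by exists 0; [move=> [] | apply/matrixP => [[]]].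
have [a [b [c [D ->]]]] :
    exists a (b : 'rV_n) (c : 'cV_n) (D : 'M_n), M = block_mx a%:M b c D.
  exists ((ulsubmx (M : 'M_(1 + n))) 0 0), (ursubmx (M : 'M_(1 + n))).
  by exists (dlsubmx (M : 'M_(1 + n))), (drsubmx (M : 'M_(1 + n))); rewrite -mx11_scalar submxK.
move=> M_ge0 ltM; have [_ b_ge0 c_ge0 D_ge0] := (mx_nonneg_block a%:M b c D).1 M_ge0.
have ltD := roots_lt_block_corner b_ge0 c_ge0 (fun t => IH D t D_ge0) ltM.
have [X X_ge0 XD] := IH D r D_ge0 ltD.
apply: (schur_inverse_nonneg b_ge0 c_ge0 X_ge0 XD).
have := char_poly_gt0 ltM; rewrite (char_poly_block_schur _ _ _ XD) mxE eqxx mulr1n.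
by rewrite pmulr_rgt0 // char_poly_gt0.
Qed.

Lemma subinvariant_char_poly_root (n : nat) (M : 'M[R]_n) (v : 'cV_n) r :
  mx_nonneg M -> mx_nonneg v -> v != 0 -> mx_ge (M *m v) (r *: v) ->
  exists2 s, r <= s & root (char_poly M) s.
Proof.
move=> M_ge0 v_ge0 v_neq0 Mv_ge.
have [//|no_root] := pselect (exists2 s, r <= s & root (char_poly M) s).
have [X X_ge0 XM] : exists2 X, mx_nonneg X & X *m (r%:M - M) = 1%:M.
  apply: roots_lt_inverse_nonneg => // s Ms; rewrite ltNge; apply/negP => rs.
  by apply: no_root; exists s.
have Mv_le : mx_ge 0 ((r%:M - M) *m v).
  by move=> i j; have := Mv_ge i j; rewrite mulmxBl mul_scalar_mx !mxE subr_le0.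
have := mx_ge_mul2l X_ge0 Mv_le; rewrite mulmx0 mulmxA XM mul1mx => v_le0.
case/eqP: v_neq0; apply/matrixP => i j; apply/le_anti.
by rewrite v_le0 v_ge0.
Qed.
End InversePositivity.

Lemma char_poly_trmx (F : fieldType) (n : nat) (M : 'M[F]_n) : char_poly M^T = char_poly M.
Proof.
rewrite /char_poly -det_tr; congr (\det _).
by apply/matrixP => i j; rewrite !mxE eq_sym.
Qed.

Lemma eigenvalue_col (F : fieldType) (n : nat) (M : 'M[F]_n) l :
  eigenvalue M l -> exists2 y : 'cV_n, M *m y = l *: y & y != 0.
Proof.
rewrite eigenvalue_root_char -char_poly_trmx -eigenvalue_root_char => /eigenvalueP[v vM v_neq0].
exists v^T; last by rewrite trmx_eq0.
by rewrite -[M]trmxK -trmx_mul vM linearZ.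
Qed.

Section Spectrum.
Variable R : realType.
Local Open Scope classical_set_scope.

Lemma normc_ge0 (z : R[i]) : 0 <= normc z.
Proof. by case: z => a b; rewrite /normc sqrtr_ge0. Qed.

Lemma normc_real (x : R) : normc x%:C%C = `|x|.
Proof. by rewrite /normc /= expr0n /= addr0 sqrtr_sqr. Qed.

Lemma normc_sum (I : finType) (F : I -> R[i]) : normc (\sum_i F i) <= \sum_i normc (F i).
Proof.
elim/big_ind2: _ => [|x1 x2 y1 y2 le1 le2|//]; first by rewrite normc0.
exact: le_trans (le_normcD _ _) (lerD le1 le2).
Qed.

Lemma spectrum_finite (n : nat) (M : 'M[R]_n) :
  exists rs : seq R[i], forall l, spectrum M l -> l \in rs.
Proof.
have [rs rsP] := closed_field_poly_normal (char_poly (map_mx (fun x : R => x%:C%C) M)).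
exists rs => l; rewrite /spectrum /= eigenvalue_root_char rsP rootZ ?root_prod_XsubC //.
by rewrite lead_coef_eq0 monic_neq0 // char_poly_monic.
Qed.

Lemma spectral_radius_ub (n : nat) (M : 'M[R]_n) l :
  spectrum M l -> normc l <= spectral_radius M.
Proof.
move=> Ml; apply: sup_upper_bound; last by exists l.
split; first by exists (normc l), l.
have [rs rsP] := spectrum_finite M.
exists (\sum_(z <- rs) normc z) => _ [l' /rsP l'_in <-].
by rewrite (big_rem l') //= lerDl sumr_ge0 // => z _; apply: normc_ge0.
Qed.

Lemma spectral_radius_eq0 (n : nat) (M : 'M[R]_n) :
  ~ (exists l, spectrum M l) -> spectral_radius M = 0.
Proof.
move=> no_eig; rewrite /spectral_radius (_ : [set _ | _ in _] = set0) ?sup0 //.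
by apply/seteqP; split=> _ //= [l Ml _]; apply: no_eig; exists l.
Qed.

Lemma spectral_radius_le (n : nat) (M : 'M[R]_n) b : 0 <= b ->
  (forall l, spectrum M l -> normc l <= b) -> spectral_radius M <= b.
Proof.
move=> b_ge0 le_b; have [[l Ml]|no_eig] := pselect (exists l, spectrum M l).
  by apply: ge_sup; [exists (normc l), l | move=> _ [l' /le_b le' <-]].
by rewrite spectral_radius_eq0.
Qed.

Lemma spectral_radius_ge0 (n : nat) (M : 'M[R]_n) : 0 <= spectral_radius M.
Proof.
have [[l Ml]|no_eig] := pselect (exists l, spectrum M l).
  exact: le_trans (normc_ge0 l) (spectral_radius_ub Ml).
by rewrite spectral_radius_eq0.
Qed.

Lemma spectral_radius_lt (n : nat) (M : 'M[R]_n) b : 0 < b ->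
  (forall l, spectrum M l -> normc l < b) -> spectral_radius M < b.
Proof.
move=> b_gt0 lt_b; have [rs rsP] := spectrum_finite M.
pose c := \big[Num.max/0]_(z <- rs | eigenvalue (map_mx (fun x : R => x%:C%C) M) z) normc z.
have c_lt : c < b by apply: bigmax_lt.
apply: le_lt_trans c_lt; apply: spectral_radius_le => [|l Ml]; first exact: bigmax_ge_id.
exact: le_bigmax_seq (rsP _ Ml) Ml.
Qed.

Lemma spectrum_char_poly_root (n : nat) (M : 'M[R]_n) s :
  root (char_poly M) s -> spectrum M s%:C%C.
Proof.
move=> Ms; rewrite /spectrum /= eigenvalue_root_char.
by rewrite (_ : map_mx _ M = map_mx (real_complex R) M) // -map_char_poly rmorph_root.
Qed.

Lemma subinvariant_le_spectral_radius (n : nat) (M : 'M[R]_n) (v : 'cV_n) r :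
  mx_nonneg M -> mx_nonneg v -> v != 0 -> mx_ge (M *m v) (r *: v) ->
  r <= spectral_radius M.
Proof.
move=> M_ge0 v_ge0 v_neq0 Mv_ge.
have [s rs /spectrum_char_poly_root/spectral_radius_ub] :=
  subinvariant_char_poly_root M_ge0 v_ge0 v_neq0 Mv_ge.
by rewrite normc_real; apply: le_trans (le_trans rs (ler_norm s)).
Qed.

End Spectrum.

Definition companion_mx (R : pzRingType) (n : nat) (B C : 'M[R]_n) : 'M[R]_(n + n) :=
  block_mx B C 1%:M 0.

Section Companion.
Variables (R : realType) (n : nat).
Implicit Types (B C : 'M[R]_n) (u : 'cV[R]_n).

Lemma companion_eigen_subinvariant B C l :
  mx_nonneg B -> mx_nonneg C -> spectrum (companion_mx B C) l -> l != 0 ->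
  exists2 u : 'cV_n, mx_nonneg u /\ u != 0 &
    mx_ge (B *m u + (normc l)^-1 *: (C *m u)) (normc l *: u).
Proof.
move=> /mx_nonnegP B_ge0 /mx_nonnegP C_ge0 /eigenvalue_col[y Wy y_neq0] l_neq0.
have map1 : map_mx (fun x : R => x%:C%C) (1%:M : 'M_n) = 1%:M.
  by apply/matrixP => i j; rewrite !mxE; case: (i == j).
rewrite map_block_mx map1 map_mx0 -[y]vsubmxK mul_block_col scale_col_mx in Wy.
case/eq_col_mx: Wy; rewrite mul1mx mul0mx addr0.
set z := usubmx y; set w := dsubmx y => Wz Ww.
have wE : w = l^-1 *: z by rewrite Ww scalerA mulVf // scale1r.
have z_neq0 : z != 0.
  by apply: contraNneq y_neq0 => z0; rewrite -[y]vsubmxK -/z -/w wE z0 scaler0 col_mx0.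
exists (map_mx (@normc R) z); first split.
- by apply/mx_nonnegP => i j; rewrite mxE normc_ge0.
- apply: contraNneq z_neq0 => /matrixP u0; apply/eqP/matrixP => i j.
  by have := u0 i j; rewrite !mxE => /eq0_normc.
move=> i j; rewrite (ord1 j).
have /matrixP/(_ i 0) := Wz; rewrite [in RHS]mxE => lz.
rewrite mxE [X in _ * X]mxE -normcM -lz wE mxE [X in _ <= X]mxE [X in _ + X]mxE.
apply: le_trans (le_normcD _ _) (lerD _ _).
  rewrite !mxE; apply: le_trans (normc_sum _) _; apply: ler_sum => k _.
  by rewrite !mxE normcM normc_real ger0_norm.
rewrite !mxE mulr_sumr; apply: le_trans (normc_sum _) _; apply: ler_sum => k _.
by rewrite !mxE !normcM normcV normc_real ger0_norm // mulrCA.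
Qed.

Lemma companion_spectral_radius_lt1 B C :
  mx_nonneg B -> mx_nonneg C ->
  (forall u, mx_nonneg u -> mx_ge ((B + C) *m u) u -> u = 0) ->
  spectral_radius (companion_mx B C) < 1.
Proof.
move=> B_ge0 C_ge0 no_subinv; apply: spectral_radius_lt => // l Wl.
have [->|l_neq0] := eqVneq l 0; first by rewrite normc0.
have [u [u_ge0 u_neq0] Wu] := companion_eigen_subinvariant B_ge0 C_ge0 Wl l_neq0.
rewrite ltNge; apply/negP => l_ge1; case/eqP: u_neq0; apply: no_subinv => // i j.
rewrite mulmxDl; have := Wu i j; have /mx_nonnegP/(_ i j) := mx_nonneg_mul C_ge0 u_ge0.
have /mx_nonnegP/(_ i j) := u_ge0.
move: (B *m u) (C *m u) (normc l) l_ge1 => Bu Cu r r_ge1; rewrite !mxE => uij_ge0 Cuij_ge0.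
have r_gt0 : 0 < r by apply: lt_le_trans r_ge1.
have : r^-1 * Cu i j <= Cu i j by rewrite ler_piMl // invf_le1.
have : u i j <= r * u i j by rewrite ler_peMl.
lra.
Qed.

Lemma companion_spectral_radius_le B1 C1 B2 C2 :
  mx_nonneg B1 -> mx_nonneg C1 -> mx_nonneg B2 -> mx_nonneg C2 ->
  mx_ge B1 B2 -> mx_ge (B2 + C2) (B1 + C1) ->
  spectral_radius (companion_mx B1 C1) < 1 ->
  spectral_radius (companion_mx B1 C1) <= spectral_radius (companion_mx B2 C2).
Proof.
move=> B1_ge0 C1_ge0 B2_ge0 C2_ge0 B12 T12 rho1_lt1.
apply: spectral_radius_le (spectral_radius_ge0 _) _ => l W1l.
have [->|l_neq0] := eqVneq l 0; first by rewrite normc0 spectral_radius_ge0.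
have [u [u_ge0 u_neq0] Wu] := companion_eigen_subinvariant B1_ge0 C1_ge0 W1l l_neq0.
set r := normc l in Wu *.
have r_gt0 : 0 < r by rewrite lt_def normc_ge0 andbT; apply: contra l_neq0 => /eqP/eq0_normc ->.
have r_lt1 : r < 1 := le_lt_trans (spectral_radius_ub W1l) rho1_lt1.
have C12 : mx_ge C2 C1.
  by move=> i j; have := B12 i j; have := T12 i j; rewrite !mxE; lra.
have Wu2 : mx_ge (B2 *m u + r^-1 *: (C2 *m u)) (r *: u).
  move=> i j; apply: le_trans (Wu i j) _.
  have := mx_ge_mul2r u_ge0 T12 i j; have := mx_ge_mul2r u_ge0 C12 i j.
  rewrite !mulmxDl; move: (B1 *m u) (C1 *m u) (B2 *m u) (C2 *m u) => B1u C1u B2u C2u.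
  rewrite !mxE => C12u T12u.
  have : C2u i j - C1u i j <= r^-1 * (C2u i j - C1u i j).
    by rewrite ler_peMl ?subr_ge0 // invf_ge1 // ltW.
  lra.
apply: (subinvariant_le_spectral_radius (v := col_mx u (r^-1 *: u))).
- by apply/mx_nonneg_block; split=> //; apply: mx_nonneg_scalar.
- rewrite /mx_nonneg -col_mx0; apply: mx_ge_col_mx => //.
  by apply: mx_nonneg_scale => //; rewrite invr_ge0 ltW.
- by apply: contraNneq u_neq0; rewrite -col_mx0 => /eq_col_mx[-> _].
rewrite /companion_mx mul_block_col mul1mx mul0mx addr0 scale_col_mx scalerA mulfV ?gt_eqF //.
by rewrite scale1r -scalemxAr; apply: mx_ge_col_mx.
Qed.

End Companion.

Section ProperSplittings.
Variable R : realType.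
Local Open Scope classical_set_scope.

(* 'M_n is a ring only when n is a successor, so powers are iterated products. *)
Definition mxpow (n : nat) (T : 'M[R]_n) (k : nat) : 'M[R]_n := iter k (mulmxr T) 1%:M.

Lemma mxpowS (n : nat) (T : 'M[R]_n) k : mxpow T k.+1 = mxpow T k *m T.
Proof. by []. Qed.

Lemma mx_nonneg_mxpow (n : nat) (T : 'M[R]_n) k : mx_nonneg T -> mx_nonneg (mxpow T k).
Proof.
move=> T_ge0; elim: k => [|k IH]; first exact: mx_nonneg_scalar.
by rewrite mxpowS; apply: mx_nonneg_mul.
Qed.

Lemma mxpow_subinvariant (n : nat) (T : 'M[R]_n) (u : 'cV_n) k :
  mx_nonneg T -> mx_ge (T *m u) u -> mx_ge (mxpow T k *m u) u.
Proof.
move=> T_ge0 Tu; elim: k => [|k IH]; first by rewrite mul1mx => i j.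
rewrite mxpowS -mulmxA => i j; apply: le_trans (IH i j) _.
exact: mx_ge_mul2l (mx_nonneg_mxpow k T_ge0) Tu i j.
Qed.

Lemma splitting_partial_sum (m n : nat) (Ah P : 'M[R]_(m, n)) k :
  rangesp P `<=` rangesp Ah -> nullsp P `<=` nullsp Ah ->
  let T := pinv P *m (P - Ah) in
  \sum_(j < k) mxpow T j *m pinv P = pinv Ah - mxpow T k *m pinv Ah.
Proof.
move=> RP NP T; set E := pinv P *m P.
have PAh : pinv P *m Ah = E - T by rewrite /T mulmxBr opprB addrC subrK.
have TE : T *m E = T.
  have [PXP _ _ _] := pinvP P.
  by rewrite /T /E mulmxBr mulmxBl -!mulmxA (mulmxA P) PXP nullsp_sub_proj.
have sum_Ah : (\sum_(j < k) mxpow T j *m pinv P) *m Ah = E - mxpow T k *m E.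
  elim: k => [|k IH]; first by rewrite big_ord0 mul0mx mul1mx subrr.
  rewrite big_ord_recr mulmxDl IH -mulmxA PAh mxpowS mulmxBr -(mulmxA _ T E) TE.
  by rewrite addrA subrK.
have PAhX : pinv P *m Ah *m pinv Ah = pinv P by rewrite -mulmxA rangesp_sub_pinv.
have EX : E *m pinv Ah = pinv Ah by apply: nullsp_sub_pinv.
have sum_X : \sum_(j < k) mxpow T j *m pinv P =
    (\sum_(j < k) mxpow T j *m pinv P) *m Ah *m pinv Ah.
  by rewrite !mulmx_suml; apply: eq_bigr => j _; rewrite -!mulmxA (mulmxA (pinv P)) PAhX.
by rewrite {1}sum_X sum_Ah mulmxBl EX -mulmxA EX.
Qed.

Lemma splitting_no_subinvariant (m n : nat) (Ah P : 'M[R]_(m, n)) (u : 'cV_n) :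
  rangesp P `<=` rangesp Ah -> nullsp P `<=` nullsp Ah ->
  mx_nonneg (pinv P) -> mx_nonneg (pinv Ah) -> mx_nonneg (pinv P *m (P - Ah)) ->
  mx_nonneg u -> mx_ge (pinv P *m (P - Ah) *m u) u -> u = 0.
Proof.
(* k u <= sum_(j < k) T^(j+1) u = S_k (P - Ah) u <= Ah^+ |(P - Ah) u| for every k. *)
move=> RP NP P_ge0 Ah_ge0 T_ge0 u_ge0 Tu.
set T := pinv P *m (P - Ah) in T_ge0 Tu.
set S := fun k => \sum_(j < k) mxpow T j *m pinv P.
have S_ge0 k : mx_nonneg (S k).
  apply/mx_nonnegP => i j; rewrite summxE sumr_ge0 // => l _.
  exact: (mx_nonnegP _).1 (mx_nonneg_mul (mx_nonneg_mxpow _ T_ge0) P_ge0) i j.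
have S_le k : mx_ge (pinv Ah) (S k).
  move=> i j; rewrite /S splitting_partial_sum // mxBE gerBl.
  exact: (mx_nonnegP _).1 (mx_nonneg_mul (mx_nonneg_mxpow _ T_ge0) Ah_ge0) i j.
set w := map_mx Num.norm ((P - Ah) *m u).
have w_ge0 : mx_nonneg w by apply/mx_nonnegP => i j; rewrite mxE normr_ge0.
have ku_le k i : k%:R * u i 0 <= (pinv Ah *m w) i 0.
  have Su : \sum_(j < k) mxpow T j.+1 *m u = S k *m ((P - Ah) *m u).
    by rewrite /S mulmx_suml; apply: eq_bigr => j _; rewrite mxpowS !mulmxA.
  apply: (@le_trans _ _ ((\sum_(j < k) mxpow T j.+1 *m u) i 0)).
    rewrite summxE -[k in k%:R]card_ord -sumr_const mulr_suml.
    by apply: ler_sum => j _; rewrite mul1r mxpow_subinvariant.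
  rewrite Su; apply: le_trans (mx_ge_mul2r w_ge0 (S_le k) i 0).
  by apply: mx_ge_mul2l (S_ge0 k) _ i 0 => i' j'; rewrite [X in _ <= X]mxE ler_norm.
apply/matrixP => i j; rewrite (ord1 j) mxE; apply/le_anti.
have /mx_nonnegP/(_ i 0) -> := u_ge0; rewrite andbT leNgt; apply/negP => ui_gt0.
have c_ge0 : 0 <= (pinv Ah *m w) i 0 / u i 0.
  exact: divr_ge0 ((mx_nonnegP _).1 (mx_nonneg_mul Ah_ge0 w_ge0) i 0) (ltW ui_gt0).
have := ku_le (Num.Def.archi_bound ((pinv Ah *m w) i 0 / u i 0)) i.
by rewrite -ler_pdivlMr // leNgt archi_boundP.
Qed.

End ProperSplittings.

Section TwoStepSplitting.
Variables (R : realType) (m n : nat) (A P1 R1 S1 P2 R2 S2 : 'M[R]_(m, n)).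
Hypotheses (split1 : double_proper_weak_regular A P1 R1 S1)
           (split2 : double_proper_weak_regular A P2 R2 S2).
Local Open Scope classical_set_scope.

Local Notation K := (S2 *m pinv P1).
Local Notation hA := ((1%:M - K) *m A).
Local Notation B := (pinv P2 *m R2 - pinv P2 *m S2 *m pinv P1 *m R1).
Local Notation C := (pinv P2 *m S2 *m pinv P1 *m S1).

Lemma two_step_blocks_nonneg : mx_nonneg B /\ mx_nonneg C.
Proof.
case: split1 => _ [_ _ _ PR1_ge0 PS1_le0]; case: split2 => _ [_ _ _ PR2_ge0 PS2_le0].
rewrite -!(mulmxA (pinv P2 *m S2)); split; last exact: mx_nonpos_mul.
apply/mx_nonnegP => i j; rewrite mxBE subr_ge0.
apply: le_trans ((mx_nonnegP _).1 PR2_ge0 i j).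
exact: (mx_nonposP _).1 (mx_nonpos_mul_nonneg PS2_le0 PR1_ge0) i j.
Qed.

Hypothesis NS2 : nullsp P2 `<=` nullsp S2.

Lemma two_step_pinv_mul : pinv P2 *m hA = pinv P2 *m P2 - (B + C).
Proof.
case: split1 => A_split1 [_ NP1 _ _ _]; case: split2 => A_split2 [_ NP2 _ _ _].
have KP1 : K *m P1 = S2 by rewrite -mulmxA nullsp_sub_proj // NP1 -NP2.
have KA : K *m A = S2 - K *m R1 + K *m S1 by rewrite {1}A_split1 mulmxDr mulmxBr KP1.
have -> : hA = P2 - (R2 - K *m R1 + K *m S1).
  by rewrite mulmxBl mul1mx KA {1}A_split2 !opprD !opprK !addrA addrK.
by rewrite mulmxBr mulmxDr mulmxBr !mulmxA.
Qed.

Lemma two_step_nullsp : nullsp P2 `<=` nullsp hA.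
Proof.
case: split2 => _ [_ -> _ _ _] x Ax.
by rewrite /nullsp /= -mulmxA Ax mulmx0.
Qed.

Hypotheses (RS2 : rangesp S2 `<=` rangesp P2) (K_no1 : ~ spectrum K 1).

Lemma two_step_rangesp : rangesp P2 `<=` rangesp hA.
Proof.
case: split2 => _ [RP2 _ _ _ _].
have K_unit : 1%:M - K \in unitmx.
  rewrite unitmxE unitfE; apply/negP => /eqP det0; apply: K_no1.
  by apply: spectrum_char_poly_root; rewrite /root horner_char_poly det0.
set X := invmx (1%:M - K) *m P2.
have KX : (1%:M - K) *m X = P2 by rewrite mulKVmx.
have X_split : X = P2 + S2 *m (pinv P1 *m X).
  by rewrite -KX mulmxBl mul1mx mulmxA subrK.
have AX : A *m pinv A *m X = X.
  rewrite {1}X_split mulmxDr rangesp_sub_proj -?RP2 // (mulmxA (A *m pinv A)).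
  by rewrite rangesp_sub_proj -?RP2 // -X_split.
move=> _ [x _ <-]; exists (pinv A *m X *m x) => //.
by rewrite -[in RHS]KX -[in RHS]AX !mulmxA.
Qed.

Lemma two_step_companion_lt1 :
  mx_nonneg (pinv hA) -> spectral_radius (companion_mx B C) < 1.
Proof.
move=> hA_ge0; have [B_ge0 C_ge0] := two_step_blocks_nonneg.
have [_ [_ _ P2_ge0 _ _]] := split2.
have T_eq : pinv P2 *m (P2 - hA) = B + C.
  by rewrite mulmxBr two_step_pinv_mul opprB addrC subrK.
apply: companion_spectral_radius_lt1 => // u u_ge0 Tu.
apply: (splitting_no_subinvariant (Ah := hA) (P := P2)); rewrite ?T_eq //.
- exact: two_step_rangesp.
- exact: two_step_nullsp.
- exact: mx_nonneg_add.
Qed.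

End TwoStepSplitting.

Theorem theorem3p13 (R : realType) (m n : nat) (A : 'M[R]_(m, n))
  (P1 R1 S1 P2 R2 S2 P3 R3 S3 P4 R4 S4 : 'M[R]_(m, n)) :
  semi_monotone A ->
  double_proper_weak_regular A P1 R1 S1 ->
  double_proper_weak_regular A P2 R2 S2 ->
  double_proper_weak_regular A P3 R3 S3 ->
  double_proper_weak_regular A P4 R4 S4 ->
  classical_sets.subset (nullsp P2) (nullsp S2) ->
  classical_sets.subset (rangesp S2) (rangesp P2) ->
  classical_sets.subset (nullsp P4) (nullsp S4) ->
  classical_sets.subset (rangesp S4) (rangesp P4) ->
  ~ spectrum (S2 *m pinv P1) 1 ->
  ~ spectrum (S4 *m pinv P3) 1 ->
  let hA1 := (1%:M - S2 *m pinv P1) *m A in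
  let hP1 := P2 in
  let hR1 := R2 - S2 *m pinv P1 *m R1 in
  let hA2 := (1%:M - S4 *m pinv P3) *m A in
  let hP2 := P4 in
  let hR2 := R4 - S4 *m pinv P3 *m R3 in
  mx_nonneg (pinv hA1) ->
  mx_nonneg (pinv hA2) ->
  mx_ge (pinv hP1 *m hA1) (pinv hP2 *m hA2) ->
  mx_ge (pinv hP1 *m hR1) (pinv hP2 *m hR2) ->
  let W12 : 'M[R]_(n + n) :=
    block_mx (pinv P2 *m R2 - pinv P2 *m S2 *m pinv P1 *m R1)
             (pinv P2 *m S2 *m pinv P1 *m S1) 1%:M 0 in
  let W34 : 'M[R]_(n + n) :=
    block_mx (pinv P4 *m R4 - pinv P4 *m S4 *m pinv P3 *m R3)
             (pinv P4 *m S4 *m pinv P3 *m S3) 1%:M 0 in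
  spectral_radius W12 <= spectral_radius W34 /\ spectral_radius W34 < 1.
Proof.
move=> _ split1 split2 split3 split4 NS2 RS2 NS4 RS4 K1_no1 K3_no1
  hA1 hP1 hR1 hA2 hP2 hR2 hA1_ge0 hA2_ge0 hA_ge hR_ge W12 W34.
have [B1_ge0 C1_ge0] := two_step_blocks_nonneg split1 split2.
have [B2_ge0 C2_ge0] := two_step_blocks_nonneg split3 split4.
have proj24 : pinv P2 *m P2 = pinv P4 *m P4.
  case: split2 => _ [_ NP2 _ _ _]; case: split4 => _ [_ NP4 _ _ _].
  by apply: pinv_proj_eq; rewrite NP2 NP4.
split; last exact: two_step_companion_lt1 split3 split4 NS4 RS4 K3_no1 hA2_ge0.
apply: companion_spectral_radius_le => //.
- by move: hR_ge; rewrite /hP1 /hR1 /hP2 /hR2 !mulmxBr !mulmxA.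
- apply: (@mx_geB2l _ _ _ (pinv P2 *m P2)); rewrite {2}proj24.
  by rewrite -(two_step_pinv_mul split1 split2 NS2) -(two_step_pinv_mul split3 split4 NS4).
- exact: two_step_companion_lt1 split1 split2 NS2 RS2 K1_no1 hA1_ge0.
Qed.
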